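(* Let $(X,d,\mu)$ be a space of homogeneous type, $1\leq r<\infty$, $q=2r-1$. If $u\in RH_{q}$ and $u^{r}\in A_{\infty}$, then for $s=1+\frac{1}{2\tau[u^{r}]_{A_{\infty}}}$, every cube $Q$ of a dyadic system and every measurable subset $E\subset Q$, $$\frac{u^{sr}(E)}{u^{sr}(c_{d}Q)}\lesssim[u]_{RH_{q}}^{q/4}\left(\frac{u(E)}{u(c_{d}Q)}\right)^{\frac{1}{4}}.$$
   Context: Space of homogeneous type: quasi-metric $d$, doubling Borel measure $\mu$. Dyadic system with parameters $c_0\le C_0$, $\delta$: cubes $Q=Q^k_j$ with $B(z^k_j,c_0\delta^k)\subset Q\subset B(z^k_j,C_0\delta^k)$; dilation $\alpha Q:=B(z^k_j,\alpha C_0\delta^k)$ for $\alpha\ge1$ (a ball). $w\in RH_q$ means $\big(\frac{w^q(B)}{\mu(B)}\big)^{1/q}\le[w]_{RH_q}\frac{w(c_dB)}{\mu(c_dB)}$ for all balls $B$, with $c_d\ge1$ a fixed constant depending on $X$. $[w]_{A_\infty}=\sup_B\frac1{w(B)}\int_BM(\chi_Bw)$. $\tau>0$ is the constant (depending on $X$) of the sharp reverse Hölder inequality: if $w\in A_\infty$ and $1\le t\le1+\frac1{\tau[w]_{A_\infty}}$ then $\big(\frac{w^t(B)}{\mu(B)}\big)^{1/t}\le c\frac{w(c_dB)}{\mu(c_dB)}$. Implicit constants depend only on $X$ and the dyadic system. *)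

From HB Require Import structures.
From mathcomp Require Import all_boot all_order all_algebra.
From mathcomp Require Import all_classical all_reals all_analysis.
Set Implicit Arguments. Unset Strict Implicit. Unset Printing Implicit Defensive.
Import Order.TTheory GRing.Theory Num.Theory.
Local Open Scope classical_set_scope.
Local Open Scope ring_scope.

Definition qball {R : realType} {T : Type} (dist : T -> T -> R) (x : T) (rho : R)
  : set T := [set y | dist x y < rho].

Definition homogeneous_type {R : realType} {dsp : measure_display}
  {T : measurableType dsp} (dist : T -> T -> R)
  (mu : {measure set T -> \bar R}) : Prop :=
  (forall x y, 0 <= dist x y) /\
  (forall x y, dist x y = 0 <-> x = y) /\
  (forall x y, dist x y = dist y x) /\
  (exists K : R, 1 <= K /\ forall x y z, dist x y <= K * (dist x z + dist z y)) /\
  (forall x rho, measurable (qball dist x rho)) /\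
  (forall x rho, 0 < rho ->
     (0 < mu (qball dist x rho))%E /\ (mu (qball dist x rho) < +oo)%E) /\
  (exists Cmu : R, forall x rho, 0 < rho ->
     (mu (qball dist x (2 * rho)) <= Cmu%:E * mu (qball dist x rho))%E).

Definition wmeas {R : realType} {dsp : measure_display} {T : measurableType dsp}
  (mu : {measure set T -> \bar R}) (w : T -> R) (E : set T) : \bar R :=
  (\int[mu]_(x in E) (w x)%:E)%E.

Definition fpow {R : realType} {T : Type} (w : T -> R) (p : R) : T -> R :=
  fun x => powR (w x) p.

Definition weight {R : realType} {dsp : measure_display} {T : measurableType dsp}
  (dist : T -> T -> R) (mu : {measure set T -> \bar R}) (w : T -> R) : Prop :=
  [/\ (forall x, 0 <= w x),
      measurable_fun setT w,
      (forall x rho, 0 < rho -> (wmeas mu w (qball dist x rho) < +oo)%E) &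
      {ae mu, forall x, 0 < w x}].

Definition RHconst {R : realType} {dsp : measure_display} {T : measurableType dsp}
  (dist : T -> T -> R) (mu : {measure set T -> \bar R}) (cd q : R) (w : T -> R)
  : \bar R :=
  ereal_sup [set ((wmeas mu (fpow w q) (qball dist x rho) / mu (qball dist x rho))
                    `^ (1 / q)
                  / (wmeas mu w (qball dist x (cd * rho))
                     / mu (qball dist x (cd * rho))))%E
            | x in [set: T] & rho in [set rho : R | 0 < rho]].

Definition maximal {R : realType} {dsp : measure_display} {T : measurableType dsp}
  (dist : T -> T -> R) (mu : {measure set T -> \bar R}) (f : T -> R) (x : T)
  : \bar R :=
  ereal_sup [set a | exists (z : T) (rho : R), 0 < rho /\ qball dist z rho x /\
              a = ((\int[mu]_(y in qball dist z rho) (`|f y|)%:E)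
                   / mu (qball dist z rho))%E].

Definition Ainfconst {R : realType} {dsp : measure_display} {T : measurableType dsp}
  (dist : T -> T -> R) (mu : {measure set T -> \bar R}) (w : T -> R) : \bar R :=
  ereal_sup [set ((\int[mu]_(y in qball dist x rho)
                     maximal dist mu (fun z => (\1_(qball dist x rho) z * w z)%R) y)
                  / wmeas mu w (qball dist x rho))%E
            | x in [set: T] & rho in [set rho : R | 0 < rho]].

Definition in_RH {R : realType} {dsp : measure_display} {T : measurableType dsp}
  (dist : T -> T -> R) (mu : {measure set T -> \bar R}) (cd q : R) (w : T -> R)
  : Prop := weight dist mu w /\ (RHconst dist mu cd q w < +oo)%E.

Definition in_Ainf {R : realType} {dsp : measure_display} {T : measurableType dsp}
  (dist : T -> T -> R) (mu : {measure set T -> \bar R}) (w : T -> R) : Prop :=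
  weight dist mu w /\ (Ainfconst dist mu w < +oo)%E.

(* The sharp reverse Hoelder inequality with constants tau, c (depending on X):
   if w in A_infty and 1 <= t <= 1 + 1/(tau [w]_{A_infty}) then
   (w^t(B)/mu(B))^{1/t} <= c w(c_d B)/mu(c_d B) for all balls B. *)
Definition sharp_RH {R : realType} {dsp : measure_display} {T : measurableType dsp}
  (dist : T -> T -> R) (mu : {measure set T -> \bar R}) (cd tau c : R) : Prop :=
  forall w : T -> R, in_Ainf dist mu w ->
  forall t : R, 1 <= t -> t <= 1 + 1 / (tau * fine (Ainfconst dist mu w)) ->
  forall x rho, 0 < rho ->
  (((wmeas mu (fpow w t) (qball dist x rho) / mu (qball dist x rho)) `^ (1 / t))
   <= c%:E * (wmeas mu w (qball dist x (cd * rho)) / mu (qball dist x (cd * rho))))%E.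

Definition dyadic_system {R : realType} {dsp : measure_display} {T : measurableType dsp}
  (dist : T -> T -> R) (c0 C0 delta : R) (I : Type)
  (cube : int -> I -> set T) (centre : int -> I -> T) : Prop :=
  0 < c0 /\ c0 <= C0 /\ 0 < delta /\ delta < 1 /\
      (forall k j, measurable (cube k j)) /\
      (forall k, forall x, exists j, cube k j x) /\
      (forall k i j, cube k i `&` cube k j !=set0 -> cube k i = cube k j) /\
      (forall k l i j, (k <= l)%R ->
         cube l i `<=` cube k j \/ cube l i `&` cube k j = set0) /\
      (forall k j, qball dist (centre k j) (c0 * delta ^ k) `<=` cube k j /\
                   cube k j `<=` qball dist (centre k j) (C0 * delta ^ k)).

(* dilation alpha Q := B(z^k_j, alpha C0 delta^k) *)
Definition dil_cube {R : realType} {T : Type} (dist : T -> T -> R) (C0 delta : R)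
  (I : Type) (centre : int -> I -> T) (alpha : R) (k : int) (j : I) : set T :=
  qball dist (centre k j) (alpha * C0 * delta ^ k).

From HB Require Import structures.
From mathcomp Require Import all_boot all_order all_algebra.
From mathcomp Require Import all_classical all_reals all_analysis.
From mathcomp Require Import measurable_realfun ring lra.
Import Order.TTheory GRing.Theory Num.Theory.
Import numFieldTopology.Exports.
Local Open Scope classical_set_scope.
Local Open Scope ring_scope.

(* Let B be the ball C0 delta^k around the centre of Q, so E <= Q <= B, and
   B' = c_d B = dil_cube cd.  With t = 2s - 1 we have
   sr = (1 + q)/4 + rt/2, so two Hoelder inequalities give
     u^{sr}(E) <= u(E)^{1/4} u^q(B)^{1/4} u^{rt}(B)^{1/2}.
   The RH_q condition bounds u^q(B) by mu(B) ([u]_{RH_q} u(B')/mu(B'))^q, and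
   s is chosen so that t = 1 + 1/(tau [u^r]_{A_infty}) is the sharp reverse
   Hoelder exponent of u^r, which bounds u^{rt}(B) by mu(B) (c u^r(B')/mu(B'))^t.
   Jensen's inequality, u(B')^r <= u^r(B') mu(B')^{r-1} and
   u^r(B')^s <= u^{sr}(B') mu(B')^{s-1}, turns these into powers of u(B') and
   u^{sr}(B'), and all powers of mu(B) <= mu(B') cancel.  Finally
   [u^r]_{A_infty} >= 1 gives t <= 1 + 1/tau, so c^{t/2} is bounded
   independently of u. *)

Section nonneg_integrals.
Context {R : realType} {d : measure_display} {T : measurableType d}.
Variable mu : {measure set T -> \bar R}.
Local Open Scope ereal_scope.

Lemma ge0_le_integral_nonmeas (D : set T) (f g : T -> \bar R) :
  (forall x, D x -> 0 <= f x) -> (forall x, D x -> f x <= g x) ->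
  \int[mu]_(x in D) f x <= \int[mu]_(x in D) g x.
Proof.
move=> f0 fg.
have g0 x : D x -> 0 <= g x by move=> Dx; exact: le_trans (f0 x Dx) (fg x Dx).
rewrite (ge0_integralE _ f0) (ge0_integralE _ g0).
apply: ereal_sup_le => _ [h hf <-]; exists h => //= x.
apply: le_trans (hf x) _; rewrite /patch; case: ifP => // /set_mem; exact: fg.
Qed.

Lemma ae_gt0_integral_gt0 (D : set T) (f : T -> R) :
  measurable D -> 0 < mu D -> measurable_fun setT f -> (forall x, (0 <= f x)%R) ->
  {ae mu, forall x, (0 < f x)%R} -> 0 < \int[mu]_(x in D) (f x)%:E.
Proof.
move=> mD muD0 mf f0 fpos.
rewrite lt0e integral_ge0 ?andbT; last by move=> x _; rewrite lee_fin.
apply/eqP => intf0.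
have mfD : measurable_fun D (EFin \o f) by exact/measurable_funTS/measurable_EFinP.
have : \int[mu]_(x in D) `|(EFin \o f) x| = 0.
  by rewrite -intf0; apply: eq_integral => x _ /=; rewrite ger0_norm.
move/(ae_eq_integral_abs mu mD mfD) => f_ae0.
have [N [mN muN0 DN]] : {ae mu, forall x, ~ D x}.
  apply: filterS2 f_ae0 fpos => x /= fx0 fxpos Dx.
  by case: (fx0 Dx) fxpos => ->; rewrite ltxx.
have : mu D <= mu N by apply: le_measure; rewrite ?inE // => x Dx; apply: DN => /=; apply.
by rewrite muN0 leNgt muD0.
Qed.

Lemma ge0_hoelder_on (D : set T) (f g : T -> R) (p q : R) :
  measurable D -> measurable_fun setT f -> measurable_fun setT g ->
  (forall x, (0 <= f x)%R) -> (forall x, (0 <= g x)%R) ->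
  (0 < p)%R -> (0 < q)%R -> (p^-1 + q^-1 = 1)%R ->
  \int[mu]_(x in D) (f x * g x)%:E <=
    (\int[mu]_(x in D) (f x `^ p)%:E) `^ p^-1 *
    (\int[mu]_(x in D) (g x `^ q)%:E) `^ q^-1.
Proof.
move=> mD mf mg f0 g0 p0 q0 pq.
have mpatch (h : T -> R) : measurable_fun setT h -> measurable_fun setT (h \_ D).
  by move=> mh; apply/(measurable_restrictT _ mD); exact: measurable_funTS.
have LnormE (h : T -> R) (a : R) : (0 < a)%R -> (forall x, (0 <= h x)%R) ->
    'N[mu]_a%:E[EFin \o (h \_ D)] = (\int[mu]_(x in D) (h x `^ a)%:E) `^ a^-1.
  move=> a0 h0; rewrite unlock; congr (_ `^ _); rewrite [RHS]integral_mkcond.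
  apply: eq_integral => x _ /=; rewrite /patch; case: ifP => _ /=.
    by rewrite ger0_norm // poweR_EFin.
  by rewrite normr0 powR0 // gt_eqF.
have N1E : 'N[mu]_1[EFin \o (f \_ D \* g \_ D)%R] = \int[mu]_(x in D) (f x * g x)%:E.
  rewrite Lnorm1 [RHS]integral_mkcond; apply: eq_integral => x _ /=.
  by rewrite /patch; case: ifP => _ /=; rewrite ?mulr0 ?normr0 // ger0_norm // mulr_ge0.
by rewrite -N1E -!LnormE //; exact: (hoelder mu (mpatch _ mf) (mpatch _ mg) p0 q0 pq).
Qed.

Lemma ge0_integral_le_powR_mean (D : set T) (h : T -> R) (p : R) :
  measurable D -> measurable_fun setT h -> (forall x, (0 <= h x)%R) -> (1 <= p)%R ->
  \int[mu]_(x in D) (h x)%:E <=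
    (\int[mu]_(x in D) (h x `^ p)%:E) `^ p^-1 * mu D `^ (1 - p^-1).
Proof.
move=> mD mh h0 p1.
have [->|pn1] := eqVneq p 1%R.
  rewrite invr1 subrr poweRe0 mule1 poweRe1; last first.
    by apply: integral_ge0 => x _; rewrite lee_fin powR_ge0.
  by under [X in _ <= X]eq_integral => x _ do rewrite powRr1 //.
have p0 : (0 < p)%R by lra.
pose q := (p / (p - 1))%R.
have q0 : (0 < q)%R by rewrite divr_gt0 // subr_gt0 lt_neqAle eq_sym pn1.
have pq : (p^-1 + q^-1 = 1)%R by rewrite /q invf_div; field; rewrite gt_eqF.
have := ge0_hoelder_on D h (fun=> 1%R) p q mD mh (@measurable_cst _ _ T R setT 1%R) h0
  (fun=> ler01) p0 q0 pq.
under eq_integral => x _ do rewrite mulr1.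
rewrite (_ : \int[mu]_(x in D) (1 `^ q)%:E = mu D); last first.
  by under eq_integral => x _ do rewrite powR1; rewrite integral_cst // mul1e.
by rewrite (_ : q^-1 = 1 - p^-1)%R // -pq addrC addKr.
Qed.

End nonneg_integrals.

Section power_weights.
Context {R : realType} {d : measure_display} {T : measurableType d}.
Variable mu : {measure set T -> \bar R}.
Implicit Types (u : T -> R) (D : set T).

Lemma fpow_ge0 u p x : 0 <= fpow u p x.
Proof. exact: powR_ge0. Qed.

Lemma measurable_fpow u p : measurable_fun setT u -> measurable_fun setT (fpow u p).
Proof. exact: measurableT_comp (measurable_powR p). Qed.

Lemma fpowM u a b : fpow (fpow u a) b = fpow u (a * b).
Proof. by apply/funext => x; rewrite /fpow powRrM. Qed.

Lemma fpow1 u : (forall x, 0 <= u x) -> fpow u 1 = u.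
Proof. by move=> u0; apply/funext => x; rewrite /fpow powRr1. Qed.

Lemma wmeas_ge0 (w : T -> R) D : (forall x, 0 <= w x) -> (0 <= wmeas mu w D)%E.
Proof. by move=> w0; apply: integral_ge0 => x _; rewrite lee_fin. Qed.

Lemma le_wmeas_subset {w : T -> R} {D1 D2 : set T} :
  measurable D1 -> measurable D2 -> D1 `<=` D2 -> measurable_fun setT w ->
  (forall x, 0 <= w x) -> (wmeas mu w D1 <= wmeas mu w D2)%E.
Proof.
move=> mD1 mD2 D12 mw w0; apply: ge0_subset_integral => //.
  exact/measurable_funTS/measurable_EFinP.
by move=> x _; rewrite lee_fin.
Qed.

Lemma wmeas_subset_fin {w : T -> R} {D1 D2 : set T} {W : R} :
  measurable D1 -> measurable D2 -> D1 `<=` D2 ->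
  measurable_fun setT w -> (forall x, 0 <= w x) -> wmeas mu w D2 = W%:E ->
  exists2 V : R, wmeas mu w D1 = V%:E & 0 <= V.
Proof.
move=> mD1 mD2 D12 mw w0 hW; have := le_wmeas_subset mD1 mD2 D12 mw w0.
have := wmeas_ge0 w D1 w0; rewrite hW.
by case: (wmeas mu w D1) => [V| |] //= V0 _; exists V; rewrite -?lee_fin.
Qed.

Lemma wmeas_le_powR_mean {w : T -> R} {D : set T} {p : R} :
  measurable D -> measurable_fun setT w -> (forall x, 0 <= w x) -> 1 <= p ->
  (wmeas mu w D <= wmeas mu (fpow w p) D `^ p^-1 * mu D `^ (1 - p^-1))%E.
Proof. exact: ge0_integral_le_powR_mean. Qed.

Lemma integral_fpow_powR u D a b :
  (\int[mu]_(x in D) (fpow u a x `^ b)%:E)%E = wmeas mu (fpow u (a * b)) D.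
Proof. by apply: eq_integral => x _; rewrite /fpow -powRrM. Qed.

Lemma integral_fpowM u D a b : 0 < a + b ->
  (\int[mu]_(x in D) (fpow u a x * fpow u b x)%:E)%E = wmeas mu (fpow u (a + b)) D.
Proof. by move=> ab0; apply: eq_integral => x _; rewrite /fpow -powRD // gt_eqF. Qed.

Lemma wmeas_fpow_hoelder u D a b p q : measurable D -> measurable_fun setT u ->
  0 < p -> 0 < q -> p^-1 + q^-1 = 1 -> 0 < a + b ->
  (wmeas mu (fpow u (a + b)) D <=
   wmeas mu (fpow u (a * p)) D `^ p^-1 * wmeas mu (fpow u (b * q)) D `^ q^-1)%E.
Proof.
move=> mD mu_ p0 q0 pq ab0; rewrite -integral_fpowM // -!integral_fpow_powR.
by apply: ge0_hoelder_on => //;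
  [exact: measurable_fpow | exact: measurable_fpow | exact: fpow_ge0 | exact: fpow_ge0].
Qed.

Local Open Scope ereal_scope.

Lemma wmeas_fpow_interpolation u E B p q :
  measurable E -> measurable B -> E `<=` B -> measurable_fun setT u ->
  (forall x, 0 <= u x)%R -> (0 < p)%R -> (0 < q)%R ->
  wmeas mu (fpow u ((1 + q) / 4 + p / 2)) E <=
  wmeas mu u E `^ (1 / 4) * wmeas mu (fpow u q) B `^ (1 / 4)
    * wmeas mu (fpow u p) B `^ (1 / 2).
Proof.
move=> mE mB EB mu_ u0 p0 q0.
(* Hoelder with exponents (4, 4/3) for u^(1/4) u^(3e/4) on E, then with
   exponents (3, 3/2) for u^e = u^(q/3) u^(2p/3) on B. *)
set e := (q / 3 + p * 2 / 3)%R.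
have pos_onE : (0 < 1 / 4 + e * 3 / 4)%R by rewrite /e; lra.
have pos_onB : (0 < q / 3 + p * 2 / 3)%R by lra.
have i4 : (4^-1 + (4 / 3)^-1 = 1 :> R)%R by rewrite invf_div; field.
have i3 : (3^-1 + (3 / 2)^-1 = 1 :> R)%R by rewrite invf_div; field.
have onE := wmeas_fpow_hoelder u E (1 / 4)%R (e * 3 / 4)%R 4%R (4 / 3)%R mE mu_
  (ltac:(lra)) (ltac:(lra)) i4 pos_onE.
have onB := wmeas_fpow_hoelder u B (q / 3)%R (p * 2 / 3)%R 3%R (3 / 2)%R mB mu_
  (ltac:(lra)) (ltac:(lra)) i3 pos_onB.
have q33 : (q / 3 * 3 = q)%R by field.
have p23 : (p * 2 / 3 * (3 / 2) = p)%R by field.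
have i44 : (1 / 4 * 4 = 1 :> R)%R by field.
have e34 : (e * 3 / 4 * (4 / 3) = e)%R by field.
have exp_sr : ((1 + q) / 4 + p / 2 = 1 / 4 + e * 3 / 4)%R by rewrite /e; field.
rewrite -/e q33 p23 in onB.
rewrite i44 e34 fpow1 // in onE.
rewrite exp_sr; apply: (le_trans onE); rewrite -muleA div1r.
apply: lee_wpmul2l; first exact: poweR_ge0.
have i34 : (0 <= (4 / 3)^-1 :> R)%R by rewrite invr_ge0 divr_ge0.
have mem_wmeas w D : (forall x, 0 <= w x)%R -> wmeas mu w D \in `[0%E, +oo%E]%R.
  by move=> w0; rewrite in_itv /= leey andbT; exact: wmeas_ge0.
have EB_le := le_wmeas_subset mE mB EB (measurable_fpow u e mu_) (fpow_ge0 u e).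
apply: le_trans (gt0_ler_poweR i34 (mem_wmeas _ E (fpow_ge0 u e))
  (mem_wmeas _ B (fpow_ge0 u e)) EB_le) _.
apply: le_trans (gt0_ler_poweR i34 (mem_wmeas _ _ (fpow_ge0 _ _)) _ onB) _.
  by rewrite in_itv /= leey andbT; apply: mule_ge0; exact: poweR_ge0.
rewrite poweRM ?poweR_ge0 // -!poweRrM invf_div.
have -> : (3^-1 * (3 / 4) = 4^-1 :> R)%R by field.
by have -> : ((3 / 2)^-1 * (3 / 4) = 1 / 2 :> R)%R by field.
Qed.

End power_weights.

Lemma lee_mean_poweR_fin (R : realType) (Y : \bar R) (m p Z : R) :
  (0 <= Y)%E -> 0 < m -> 0 < p -> 0 <= Z ->
  ((Y / m%:E) `^ (1 / p) <= Z%:E)%E ->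
  exists y : R, [/\ Y = y%:E, 0 <= y & y <= m * Z `^ p].
Proof.
move=> Y0 m0 p0 Z0; rewrite inver gt_eqF //.
case: Y Y0 => [y| |] //= y0; last first.
  by rewrite gt0_mulye ?lte_fin ?invr_gt0 // poweRyr ?div1r ?invr_eq0 ?gt_eqF // leNgt ltey.
rewrite lee_fin => ym_le; exists y; split; rewrite -?lee_fin //.
have ym0 : 0 <= y / m by rewrite divr_ge0 // ltW.
have := ge0_ler_powR (ltW p0) _ _ ym_le.
rewrite -powRrM mul1r mulVf ?gt_eqF // powRr1 // !nnegrE powR_ge0 => /(_ isT Z0).
by rewrite ler_pdivrMr // mulrC.
Qed.

Lemma powR_le_max1_powR (R : realType) (c a b : R) : 0 < c -> 0 <= a -> a <= b ->
  c `^ a <= Num.max 1 c `^ b.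
Proof.
move=> c0 a0 ab; have M1 : 1 <= Num.max 1 c by rewrite le_max lexx.
apply: (@le_trans _ _ (Num.max 1 c `^ a)); last exact: ler_powR.
apply: ge0_ler_powR => //.
- by rewrite nnegrE ltW.
- by rewrite nnegrE (le_trans ler01 M1).
- by rewrite le_max lexx orbT.
Qed.

Section hoelder_chain.
Context {R : realType}.

Lemma gt0_hoelder_chain_estimate {r s c K m ms Us UE Wrs Ss Uq Wt SE : R} :
  1 <= r -> 1 <= s -> 0 < c -> 0 < K -> 0 < m -> m <= ms -> 0 < ms ->
  0 < Us -> 0 < Wrs -> 0 < Ss -> 0 < UE -> 0 < Uq -> 0 < Wt -> 0 < SE ->
  SE <= UE `^ (1 / 4) * Uq `^ (1 / 4) * Wt `^ (1 / 2) ->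
  Uq <= m * (K * (Us / ms)) `^ (2 * r - 1) ->
  Wt <= m * (c * (Wrs / ms)) `^ (2 * s - 1) ->
  Us <= Wrs `^ r^-1 * ms `^ (1 - r^-1) ->
  Wrs <= Ss `^ s^-1 * ms `^ (1 - s^-1) ->
  SE / Ss <= c `^ ((2 * s - 1) / 2) * K `^ ((2 * r - 1) / 4) * (UE / Us) `^ (1 / 4).
Proof.
move=> r1 s1 c0 K0 m0 m_le ms0 Us0 Wrs0 Ss0 UE0 Uq0 Wt0 SE0.
(* Writing each positive quantity as expR of its logarithm makes every
   hypothesis a linear inequality between logarithms. *)
have expE (v : R) : 0 < v -> v = expR (ln v) by move=> v0; rewrite lnK ?posrE.
have expRN' (x : R) : (expR x)^-1 = expR (- x) by rewrite expRN.
have expRD' (x y : R) : expR x * expR y = expR (x + y) by rewrite expRD.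
have expRM' (x y : R) : (expR x) `^ y = expR (x * y) by rewrite expRM.
move: m_le.
rewrite (expE SE) // (expE Ss) // (expE c) // (expE K) // (expE m) // (expE ms) //.
rewrite (expE Us) // (expE UE) // (expE Wrs) // (expE Uq) // (expE Wt) //.
rewrite !(expRN', expRD', expRM') !ler_expR => m_le SE_le Uq_le Wt_le Us_le Wrs_le.
have r0 : 0 < r by lra.
have s0 : 0 < s by lra.
have {}Us_le : ln Us * r <= ln Wrs + ln ms * (r - 1).
  rewrite (_ : _ + _ = (ln Wrs / r + ln ms * (1 - r^-1)) * r) ?ler_pM2r //.
  by field; rewrite gt_eqF.
have {}Wrs_le : ln Wrs * s <= ln Ss + ln ms * (s - 1).
  rewrite (_ : _ + _ = (ln Ss / s + ln ms * (1 - s^-1)) * s) ?ler_pM2r //.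
  by field; rewrite gt_eqF.
lra.
Qed.

Lemma hoelder_chain_estimate {r s c K m ms Us UE Wrs Ss Uq Wt SE : R} :
  1 <= r -> 1 <= s -> 0 < c -> 0 <= K -> 0 < m -> m <= ms ->
  0 < Us -> 0 < Wrs -> 0 < Ss -> 0 <= UE -> 0 <= Uq -> 0 <= Wt -> 0 <= SE ->
  SE <= UE `^ (1 / 4) * Uq `^ (1 / 4) * Wt `^ (1 / 2) ->
  Uq <= m * (K * (Us / ms)) `^ (2 * r - 1) ->
  Wt <= m * (c * (Wrs / ms)) `^ (2 * s - 1) ->
  Us <= Wrs `^ r^-1 * ms `^ (1 - r^-1) ->
  Wrs <= Ss `^ s^-1 * ms `^ (1 - s^-1) ->
  SE / Ss <= c `^ ((2 * s - 1) / 2) * K `^ ((2 * r - 1) / 4) * (UE / Us) `^ (1 / 4).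
Proof.
move=> r1 s1 c0 K0 m0 m_le Us0 Wrs0 Ss0 UE0 Uq0 Wt0 SE0 SE_le Uq_le Wt_le Us_le Wrs_le.
have [->|SEn0] := eqVneq SE 0; first by rewrite mul0r !mulr_ge0 ?powR_ge0.
have SEpos : 0 < SE by rewrite lt_neqAle eq_sym SEn0.
have four0 : 1 / 4 != 0 :> R by rewrite div1r invr_neq0.
have two0 : 1 / 2 != 0 :> R by rewrite div1r invr_neq0.
have q0 : 2 * r - 1 != 0 by rewrite gt_eqF //; lra.
have UEpos : 0 < UE.
  rewrite lt_neqAle UE0 andbT; apply: contraTneq SE_le => <-.
  by rewrite powR0 // !mul0r -ltNge.
have Uqpos : 0 < Uq.
  rewrite lt_neqAle Uq0 andbT; apply: contraTneq SE_le => <-.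
  by rewrite powR0 // mulr0 mul0r -ltNge.
have Wtpos : 0 < Wt.
  rewrite lt_neqAle Wt0 andbT; apply: contraTneq SE_le => <-.
  by rewrite powR0 // mulr0 -ltNge.
have Kpos : 0 < K.
  rewrite lt_neqAle K0 andbT; apply: contraTneq Uq_le => <-.
  by rewrite mul0r powR0 // mulr0 -ltNge.
exact: (gt0_hoelder_chain_estimate r1 s1 c0 Kpos m0 m_le (lt_le_trans m0 m_le)
  Us0 Wrs0 Ss0 UEpos Uqpos Wtpos SEpos SE_le Uq_le Wt_le Us_le Wrs_le).
Qed.

End hoelder_chain.

Lemma qball_subset_dil {R : realType} {T : Type} (dist : T -> T -> R) (x : T) {cd rho : R} :
  1 <= cd -> 0 <= rho -> qball dist x rho `<=` qball dist x (cd * rho).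
Proof.
by move=> cd1 rho0 y; rewrite /qball /= => /lt_le_trans; apply; rewrite ler_peMl.
Qed.

Section homogeneous_balls.
Context {R : realType} {dsp : measure_display} {T : measurableType dsp}.
Context {dist : T -> T -> R} {mu : {measure set T -> \bar R}}.
Hypothesis hX : homogeneous_type dist mu.

Lemma measurable_qball x rho : measurable (qball dist x rho).
Proof. by case: hX => _ [_ [_ [_ [mball _]]]]. Qed.

Lemma qball_measure_fin (x : T) {rho : R} : 0 < rho ->
  exists2 m : R, mu (qball dist x rho) = m%:E & 0 < m.
Proof.
case: hX => _ [_ [_ [_ [_ [muball _]]]]] /(muball x) [mu0 muoo].
by exists (fine (mu (qball dist x rho))); rewrite ?fineK ?fine_gt0 ?mu0 ?muoo // ge0_fin_numE ?ltW.
Qed.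

Lemma wmeas_qball_gt0 {w : T -> R} (x : T) {rho : R} : 0 < rho ->
  measurable_fun setT w -> (forall y, 0 <= w y) -> {ae mu, forall y, 0 < w y} ->
  (0 < wmeas mu w (qball dist x rho))%E.
Proof.
move=> rho0 mw w0 wpos; apply: ae_gt0_integral_gt0 => //; first exact: measurable_qball.
by have [m -> m0] := qball_measure_fin x rho0; rewrite lte_fin.
Qed.

Lemma weight_qball_fin {w : T -> R} (x : T) {rho : R} : weight dist mu w -> 0 < rho ->
  exists2 W : R, wmeas mu w (qball dist x rho) = W%:E & 0 < W.
Proof.
case=> w0 mw wloc wpos rho0; have W0 := wmeas_qball_gt0 x rho0 mw w0 wpos.
exists (fine (wmeas mu w (qball dist x rho))); last by rewrite fine_gt0 ?W0 ?wloc.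
by rewrite fineK // ge0_fin_numE ?wloc // ltW.
Qed.

Lemma weight_fpow_qball_gt0 {w : T -> R} (p : R) (x : T) {rho : R} :
  weight dist mu w -> 0 < rho -> (0 < wmeas mu (fpow w p) (qball dist x rho))%E.
Proof.
case=> w0 mw _ wpos rho0; apply: wmeas_qball_gt0 => //.
- exact: measurable_fpow.
- exact: fpow_ge0.
- by apply: filterS wpos => y wy; exact: powR_gt0.
Qed.

Lemma Ainfconst_ge1 {w : T -> R} (x : T) : in_Ainf dist mu w ->
  1 <= fine (Ainfconst dist mu w).
Proof.
case=> wW Aoo; set B := qball dist x 1.
have [m hm m0] := qball_measure_fin x ltr01.
have [W hW W0] := weight_qball_fin x wW ltr01.
have [w0 _ _ _] := wW.
have average_le y : B y ->
    ((W / m)%:E <= maximal dist mu (fun z => (\1_B z * w z)%R) y)%E.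
  move=> By; apply: ereal_sup_ubound; exists x, 1; split => //; split => //.
  rewrite hm inver gt_eqF // EFinM -hW; congr (_ * _)%E.
  apply: eq_integral => z /[!inE] Bz.
  by rewrite indicE mem_set // mul1r ger0_norm.
have W_le : (W%:E <= \int[mu]_(y in B) maximal dist mu (fun z => (\1_B z * w z)%R) y)%E.
  have cst_ge0 y : B y -> (0 <= (W / m)%:E)%E by rewrite lee_fin divr_ge0 ?ltW.
  have := ge0_le_integral_nonmeas mu B (cst (W / m)%:E) _ cst_ge0 average_le.
  by rewrite integral_cst ?hm -?EFinM ?mulfVK ?gt_eqF //; exact: measurable_qball.
have A1 : (1 <= Ainfconst dist mu w)%E.
  have B_le : ((\int[mu]_(y in B) maximal dist mu (fun z => (\1_B z * w z)%R) y)
      / wmeas mu w B <= Ainfconst dist mu w)%E.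
    by apply: ereal_sup_ubound; exists x => //; exists 1 => /=; rewrite ?ltr01.
  apply: le_trans B_le; rewrite hW -[1%E](@divee _ W%:E) ?gt_eqF //.
  by apply: lee_wpmul2r W_le; rewrite inve_ge0 lee_fin ltW.
by rewrite -lee_fin fineK // ge0_fin_numE ?Aoo // (le_trans _ A1).
Qed.

Context {cd : R}.
Hypothesis cd1 : 1 <= cd.

Lemma RHconst_fin {w : T -> R} {q : R} (x : T) : in_RH dist mu cd q w ->
  exists2 K : R, RHconst dist mu cd q w = K%:E & 0 <= K.
Proof.
case=> -[w0 _ _ _] RHoo.
have ratio_le : (((wmeas mu (fpow w q) (qball dist x 1) / mu (qball dist x 1)) `^ (1 / q))
    / (wmeas mu w (qball dist x (cd * 1)) / mu (qball dist x (cd * 1)))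
    <= RHconst dist mu cd q w)%E.
  by apply: ereal_sup_ubound; exists x => //; exists 1 => /=; rewrite ?ltr01.
have K0 : (0 <= RHconst dist mu cd q w)%E.
  apply: le_trans ratio_le; apply: mule_ge0; first exact: poweR_ge0.
  by rewrite inve_ge0; apply: mule_ge0; [exact: wmeas_ge0 | rewrite inve_ge0].
exists (fine (RHconst dist mu cd q w)); last exact: fine_ge0.
by rewrite fineK // ge0_fin_numE.
Qed.

Lemma RH_qball_le {w : T -> R} {q K : R} (x : T) {rho : R} :
  in_RH dist mu cd q w -> RHconst dist mu cd q w = K%:E -> 0 < q -> 0 < rho ->
  exists y : R, [/\ wmeas mu (fpow w q) (qball dist x rho) = y%:E, 0 <= y &
    y <= fine (mu (qball dist x rho)) * (K * (fine (wmeas mu w (qball dist x (cd * rho)))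
                                          / fine (mu (qball dist x (cd * rho))))) `^ q].
Proof.
move=> [wW _] hK q0 rho0; have [w0 _ _ _] := wW.
have cdrho0 : 0 < cd * rho by rewrite mulr_gt0 // (lt_le_trans ltr01).
have [m hm m0] := qball_measure_fin x rho0.
have [ms hms ms0] := qball_measure_fin x cdrho0.
have [W hW W0] := weight_qball_fin x wW cdrho0.
have ratio_le : (((wmeas mu (fpow w q) (qball dist x rho) / mu (qball dist x rho)) `^ (1 / q))
    / (wmeas mu w (qball dist x (cd * rho)) / mu (qball dist x (cd * rho)))
    <= RHconst dist mu cd q w)%E.
  by apply: ereal_sup_ubound; exists x => //; exists rho.
rewrite hK hm hms hW (inver ms) (gt_eqF ms0) -EFinM (inver (W / ms)) gt_eqF ?divr_gt0 //
  lee_pdivrMr ?divr_gt0 // in ratio_le.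
rewrite hm hms hW /=; apply: lee_mean_poweR_fin; rewrite -?EFinM //.
- exact/wmeas_ge0/fpow_ge0.
- by rewrite -lee_fin EFinM (le_trans (poweR_ge0 _ _) ratio_le).
Qed.

Context {tau c : R}.
Hypothesis srh : sharp_RH dist mu cd tau c.

Lemma sharp_RH_qball_le {w : T -> R} {t : R} (x : T) {rho : R} :
  in_Ainf dist mu w -> 1 <= t -> t <= 1 + 1 / (tau * fine (Ainfconst dist mu w)) ->
  0 < rho ->
  exists y : R, [/\ wmeas mu (fpow w t) (qball dist x rho) = y%:E, 0 <= y &
    y <= fine (mu (qball dist x rho)) * (c * (fine (wmeas mu w (qball dist x (cd * rho)))
                                          / fine (mu (qball dist x (cd * rho))))) `^ t].
Proof.
move=> wA t1 t_le rho0; have [[w0 _ _ _] _] := wA.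
have cdrho0 : 0 < cd * rho by rewrite mulr_gt0 // (lt_le_trans ltr01).
have [m hm m0] := qball_measure_fin x rho0.
have [ms hms ms0] := qball_measure_fin x cdrho0.
have [W hW W0] := weight_qball_fin x wA.1 cdrho0.
have := srh w wA t t1 t_le x rho rho0.
rewrite hm hms hW (inver ms) (gt_eqF ms0) -!EFinM => mean_le.
apply: lee_mean_poweR_fin => //.
- exact/wmeas_ge0/fpow_ge0.
- exact: lt_le_trans ltr01 t1.
- by rewrite -lee_fin (le_trans (poweR_ge0 _ _) mean_le).
Qed.

Hypothesis c_gt0 : 0 < c.

Lemma qball_estimate {u : T -> R} {r s : R} {x : T} {rho : R} {E : set T} :
  1 <= r -> 1 <= s ->
  in_RH dist mu cd (2 * r - 1) u -> in_Ainf dist mu (fpow u r) ->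
  2 * s - 1 <= 1 + 1 / (tau * fine (Ainfconst dist mu (fpow u r))) ->
  0 < rho -> measurable E -> E `<=` qball dist x rho ->
  (wmeas mu (fpow u (s * r)) E / wmeas mu (fpow u (s * r)) (qball dist x (cd * rho))
   <= (c `^ ((2 * s - 1) / 2))%:E * RHconst dist mu cd (2 * r - 1) u `^ ((2 * r - 1) / 4)
      * (wmeas mu u E / wmeas mu u (qball dist x (cd * rho))) `^ (1 / 4))%E.
Proof.
move=> r1 s1 uRH urA t_le rho0 mE EB.
have [uW _] := uRH; have [u0 mu_ _ _] := uW.
have q0 : 0 < 2 * r - 1 by lra.
have t1 : 1 <= 2 * s - 1 by lra.
have s_le : s <= 1 + 1 / (tau * fine (Ainfconst dist mu (fpow u r))) by lra.
have cdrho0 : 0 < cd * rho by rewrite mulr_gt0 // (lt_le_trans ltr01).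
have BBs := qball_subset_dil dist x cd1 (ltW rho0).
have EBs := subset_trans EB BBs.
have mB := measurable_qball x rho; have mBs := measurable_qball x (cd * rho).
have [m hm m0] := qball_measure_fin x rho0.
have [ms hms ms0] := qball_measure_fin x cdrho0.
have m_le : m <= ms by rewrite -lee_fin -hm -hms le_measure ?inE.
have [Us hUs Us0] := weight_qball_fin x uW cdrho0.
have [Wrs hWrs Wrs0] := weight_qball_fin x urA.1 cdrho0.
have [K hK K0] := RHconst_fin x uRH.
have [Uq [hUq Uq0 Uq_le]] := RH_qball_le x uRH hK q0 rho0.
rewrite hm hms hUs /= in Uq_le.
have [Wt [hWt Wt0 Wt_le]] := sharp_RH_qball_le x urA t1 t_le rho0.
rewrite fpowM in hWt; rewrite hm hms hWrs /= in Wt_le.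
have [Ss [hSs _ _]] := sharp_RH_qball_le x urA s1 s_le cdrho0.
rewrite fpowM (mulrC r s) in hSs.
have Ss0 := weight_fpow_qball_gt0 (s * r) x uW cdrho0.
rewrite hSs lte_fin in Ss0.
have [UE hUE UE0] := wmeas_subset_fin mu mE mBs EBs mu_ u0 hUs.
have [SE hSE SE0] :=
  wmeas_subset_fin mu mE mBs EBs (measurable_fpow u _ mu_) (fpow_ge0 u _) hSs.
have p0 : 0 < r * (2 * s - 1) by rewrite mulr_gt0 //; lra.
have interp := wmeas_fpow_interpolation mu u E _ _ _ mE mB EB mu_ u0 p0 q0.
have exp_sr : (1 + (2 * r - 1)) / 4 + r * (2 * s - 1) / 2 = s * r by field.
rewrite exp_sr hSE hUE hUq hWt !poweR_EFin -!EFinM lee_fin in interp.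
have jensen_u := wmeas_le_powR_mean mu mBs mu_ u0 r1.
rewrite hUs hWrs hms !poweR_EFin -EFinM lee_fin in jensen_u.
have jensen_ur :=
  wmeas_le_powR_mean mu mBs (measurable_fpow u r mu_) (fpow_ge0 u r) s1.
rewrite fpowM (mulrC r s) hSs hWrs hms !poweR_EFin -EFinM lee_fin in jensen_ur.
rewrite hSE hSs hK hUE hUs (inver Ss) (gt_eqF Ss0) (inver Us) (gt_eqF Us0).
rewrite -!EFinM lee_fin.
exact: (hoelder_chain_estimate r1 s1 c_gt0 K0 m0 m_le Us0 Wrs0 Ss0 UE0 Uq0 Wt0 SE0
  interp Uq_le Wt_le jensen_u jensen_ur).
Qed.

End homogeneous_balls.

Theorem lemma3p9 (R : realType) (dsp : measure_display) (T : measurableType dsp)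
  (dist : T -> T -> R) (mu : {measure set T -> \bar R}) (cd tau c : R)
  (c0 C0 delta : R) (I : Type) (cube : int -> I -> set T) (centre : int -> I -> T) :
  homogeneous_type dist mu -> 1 <= cd -> 0 < tau -> 0 < c ->
  sharp_RH dist mu cd tau c ->
  dyadic_system dist c0 C0 delta cube centre ->
  exists C : R, 0 < C /\
  forall (r : R) (u : T -> R), 1 <= r ->
  let q := 2 * r - 1 in
  in_RH dist mu cd q u -> in_Ainf dist mu (fpow u r) ->
  let s := 1 + 1 / (2 * tau * fine (Ainfconst dist mu (fpow u r))) in
  forall (k : int) (j : I) (E : set T), measurable E -> E `<=` cube k j ->
  (wmeas mu (fpow u (s * r)) E
     / wmeas mu (fpow u (s * r)) (dil_cube dist C0 delta centre cd k j)
   <= C%:E * (RHconst dist mu cd q u) `^ (q / 4)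
        * (wmeas mu u E / wmeas mu u (dil_cube dist C0 delta centre cd k j)) `^ (1 / 4))%E.
Proof.
move=> hX cd1 tau0 cpos srh [c00 [c0C0 [delta0 [_ [_ [_ [_ [_ cube_ball]]]]]]]].
exists (Num.max 1 c `^ ((1 + tau^-1) / 2)); split.
  by apply: powR_gt0; rewrite lt_max ltr01.
move=> r u r1 q uRH urA s k j E mE EQ.
have A1 := Ainfconst_ge1 hX (centre k j) urA.
have A0 := lt_le_trans ltr01 A1.
have t_eq : 2 * s - 1 = 1 + 1 / (tau * fine (Ainfconst dist mu (fpow u r))).
  by rewrite /s; field; rewrite !gt_eqF.
have s1 : 1 <= s by rewrite /s lerDl divr_ge0 // ltW // !mulr_gt0.
have rho0 : 0 < C0 * delta ^ k by rewrite mulr_gt0 ?exprz_gt0 // (lt_le_trans c00 c0C0).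
rewrite /dil_cube -mulrA.
have t_le : 2 * s - 1 <= 1 + 1 / (tau * fine (Ainfconst dist mu (fpow u r))) by rewrite t_eq.
apply: le_trans (qball_estimate hX cd1 srh cpos r1 s1 uRH urA t_le rho0 mE _) _.
  exact: subset_trans EQ (cube_ball k j).2.
apply: lee_wpmul2r; first exact: poweR_ge0.
apply: lee_wpmul2r; first exact: poweR_ge0.
rewrite lee_fin powR_le_max1_powR // ?ler_pM2r //; first by rewrite divr_ge0 //; lra.
by rewrite t_eq lerD2l div1r lef_pV2 ?posrE ?mulr_gt0 // ler_pMr.
Qed.
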